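(* Let $K\subset\mathbb{R}^n$ be a $0$-symmetric convex body, and let $a_1,\dots,a_n\in\mathbb{Z}^n$ be linearly independent with $a_j\in\lambda_j(K)K$ for $1\le j\le n$. Let $i\in\{1,\dots,n-1\}$, let $\overline{L}$ be an $i$-dimensional linear subspace of $\mathbb{R}^n$ containing $i$ linearly independent points of $\mathbb{Z}^n$, and let $j_1,\dots,j_{n-i}$ be distinct indices in $\{1,\dots,n\}$ with $\mathrm{lin}\{a_{j_1},\dots,a_{j_{n-i}}\}\cap\overline{L}=\{0\}$. Then $$\prod_{j=1}^i\lambda_j(K\cap\overline{L},\mathbb{Z}^n\cap\overline{L})\geq\prod_{k\in\{1,\dots,n\}\setminus\{j_1,\dots,j_{n-i}\}}\lambda_k(K).$$
   Context: A $0$-symmetric convex body is a compact convex set $K=-K$ with nonempty interior. $\lambda_j(K)=\min\{\lambda>0:\dim(\lambda K\cap\mathbb{Z}^n)\ge j\}$ ($\dim$ = dimension of affine hull). Analogously, for the $i$-dimensional body $K\cap\overline{L}$ in the space $\overline{L}$ with lattice $\mathbb{Z}^n\cap\overline{L}$, $\lambda_j(K\cap\overline{L},\mathbb{Z}^n\cap\overline{L})=\min\{\lambda>0:\dim(\lambda (K\cap\overline{L})\cap\mathbb{Z}^n)\ge j\}$, $1\le j\le i$. *)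

From HB Require Import structures.
From mathcomp Require Import all_boot all_order all_algebra.
From mathcomp Require Import all_classical all_reals all_analysis.
Set Implicit Arguments. Unset Strict Implicit. Unset Printing Implicit Defensive.
Import Order.TTheory GRing.Theory Num.Theory.
Import numFieldNormedType.Exports.
Local Open Scope classical_set_scope.
Local Open Scope ring_scope.

Definition lattice_pt (R : realType) (n : nat) (v : 'rV[R]_n) : Prop :=
  forall k : 'I_n, v 0 k \is a Num.int.

Definition convex_set (R : realType) (n : nat) (K : set 'rV[R]_n) : Prop :=
  forall x y (t : R), K x -> K y -> 0 <= t -> t <= 1 -> K (t *: x + (1 - t) *: y).

Definition sym_convex_body (R : realType) (n : nat) (K : set 'rV[R]_n) : Prop :=
  [/\ compact K, convex_set K, [set - x | x in K] = K & interior K !=set0].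

Definition dilate (R : realType) (n : nat) (l : R) (K : set 'rV[R]_n) : set 'rV[R]_n :=
  [set l *: x | x in K].

(* dim (affine hull S) >= j, i.e. S contains j+1 affinely independent points *)
Definition affdim_ge (R : realType) (n : nat) (S : set 'rV[R]_n) (j : nat) : Prop :=
  exists (x0 : 'rV[R]_n) (xs : 'I_j -> 'rV[R]_n),
    [/\ S x0, (forall k, S (xs k)) & row_free (\matrix_(k < j) (xs k - x0))].

(* j-th successive minimum of S w.r.t. Z^n (as the infimum, which is a minimum
   for convex bodies):  min{ l > 0 : dim(l S ∩ Z^n) >= j } *)
Definition succ_min (R : realType) (n : nat) (S : set 'rV[R]_n) (j : nat) : R :=
  inf [set l : R | 0 < l /\ affdim_ge (dilate l S `&` [set v | lattice_pt v]) j].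

From Pilot Require Import Defs.
From HB Require Import structures.
From mathcomp Require Import all_boot all_order all_algebra.
From mathcomp Require Import all_classical all_reals all_analysis.
From mathcomp Require Import ring lra.
Import Order.TTheory GRing.Theory Num.Theory.
Import numFieldNormedType.Exports.
Set Implicit Arguments. Unset Strict Implicit. Unset Printing Implicit Defensive.
Local Open Scope classical_set_scope.
Local Open Scope ring_scope.

(* Write lambda_k for the successive minima of K and mu_m for those of the
   section K ∩ L.  Fix m < i and any l > 0 for which l(K ∩ L) contains m + 1
   affinely independent lattice points.  The rows a_k of A with k in the image
   of J and lambda_k <= l lie in lK, and since their span meets L only in 0 they
   extend those m + 1 points to an affinely independent family.  Hence the
   number of k with lambda_k <= l exceeds the number of such k in the image of J
   by at least m + 1.  Taking
   l close enough to mu_m, at least m + 1 of the n - (n - i) = i remaining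
   lambda_k are <= mu_m, and multiplying these inequalities in increasing order
   gives the bound. *)

Lemma widen_ord_inj m n (mn : (m <= n)%N) : injective (widen_ord mn).
Proof. by move=> a b /(congr1 val) /= /val_inj. Qed.

Section RowFree.
Variable F : fieldType.

Lemma row_free_rowsub m1 m2 n (f : 'I_m2 -> 'I_m1) (A : 'M[F]_(m1, n)) :
  injective f -> row_free A -> row_free (rowsub f A).
Proof.
move=> f_inj freeA; apply: inj_row_free => v.
rewrite rowsubE mulmxA => /eqP; rewrite -(mul0mx _ A) => /eqP/(row_free_inj freeA) vS0.
apply/rowP => j; move/rowP/(_ (f j)): vS0; rewrite !mxE => <-.
rewrite (bigD1 j) //= !mxE eqxx mulr1 big1 ?addr0 // => k kj.
by rewrite !mxE (inj_eq f_inj) (negbTE kj) mulr0.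
Qed.

Lemma row_free_col_mx_capv0 m p n (U V : {vspace 'rV[F]_n}) (x0 : 'rV[F]_n)
    (D : 'M[F]_(m, n)) (B : 'M[F]_(p, n)) :
  x0 \in U -> (forall k, row k D \in U) -> (forall j, row j B \in V) ->
  (V :&: U = 0)%VS -> row_free D -> row_free B ->
  row_free (col_mx D (\matrix_j (row j B - x0))).
Proof.
move=> x0U DU BV VU0 freeD freeB; apply: inj_row_free => v.
rewrite -[v]hsubmxK mul_row_col; set v1 := lsubmx v; set v2 := rsubmx v => hv.
have shiftE : v2 *m \matrix_j (row j B - x0) = v2 *m B - (\sum_j v2 0 j) *: x0.
  rewrite !mulmx_sum_row scaler_suml -sumrB.
  by apply: eq_bigr => j _; rewrite rowK scalerBr.
have v2BE : v2 *m B = (\sum_j v2 0 j) *: x0 - v1 *m D.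
  have : v2 *m \matrix_j (row j B - x0) = - (v1 *m D).
    by apply/eqP; rewrite -addr_eq0 addrC hv.
  by rewrite shiftE => /(canRL (subrK _)); rewrite addrC.
have v2B0 : v2 *m B = 0.
  apply/eqP; rewrite -memv0 -VU0 memv_cap; apply/andP; split.
    by rewrite mulmx_sum_row; apply: memv_suml => j _; exact/memvZ/BV.
  rewrite v2BE; apply: memvB; first exact: memvZ.
  by rewrite mulmx_sum_row; apply: memv_suml => k _; exact/memvZ/DU.
have v20 : v2 = 0 by apply: (row_free_inj freeB); rewrite v2B0 mul0mx.
have v10 : v1 = 0.
  by apply: (row_free_inj freeD); rewrite mul0mx; move: hv; rewrite v20 mul0mx addr0.
by rewrite v10 v20 row_mx0.
Qed.

End RowFree.

Section AffineDimension.
Variables (R : realType) (n : nat).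
Implicit Types S T : set 'rV[R]_n.

Lemma affdim_ge_leq_dim S N : affdim_ge S N -> (N <= n)%N.
Proof. by move=> [x0 [xs [_ _ /eqP <-]]]; exact: rank_leq_col. Qed.

Lemma affdim_geW S N s : (s <= N)%N -> affdim_ge S N -> affdim_ge S s.
Proof.
move=> sN [x0 [xs [Sx0 Sxs freeX]]].
exists x0, (fun k => xs (widen_ord sN k)); split=> //.
have -> : \matrix_(k < s) (xs (widen_ord sN k) - x0) =
          rowsub (widen_ord sN) (\matrix_(k < N) (xs k - x0)).
  by apply/row_matrixP => k; rewrite row_rowsub !rowK.
by apply: row_free_rowsub freeX; exact: widen_ord_inj.
Qed.

Lemma affdim_ge_col_mx S T (U V : {vspace 'rV[R]_n}) N p (B : 'M[R]_(p, n)) :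
  S `<=` T -> S `<=` [set x | x \in U] ->
  (forall j, T (row j B)) -> (forall j, row j B \in V) -> (V :&: U = 0)%VS ->
  row_free B -> affdim_ge S N -> affdim_ge T (N + p).
Proof.
move=> ST SU TB BV VU0 freeB [x0 [xs [Sx0 Sxs freeX]]].
pose D := \matrix_(k < N) (xs k - x0).
pose E := col_mx D (\matrix_j (row j B - x0)).
have freeE : row_free E.
  apply: row_free_col_mx_capv0 (SU _ Sx0) _ BV VU0 freeX freeB => k.
  by rewrite rowK memvB //; exact: SU.
exists x0, (fun k => row k E + x0); split.
- exact: ST.
- move=> k; rewrite /E; case: (splitP k) => [k' kE | k' kE].
    by rewrite (_ : k = lshift p k') ?rowKu ?rowK ?subrK; [exact/ST/Sxs | exact: val_inj].
  by rewrite (_ : k = rshift N k') ?rowKd ?rowK ?subrK //; exact: val_inj.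
- suff -> : \matrix_k (row k E + x0 - x0) = E by [].
  by apply/row_matrixP => k; rewrite rowK addrK.
Qed.

End AffineDimension.

Section Dilates.
Variables (R : realType) (n : nat) (K : set 'rV[R]_n).

Lemma sym_convex_bodyN : sym_convex_body K -> forall x, K x -> K (- x).
Proof. by case=> _ _ KN _ x Kx; rewrite -KN; exists x. Qed.

Lemma sym_convex_body0 : sym_convex_body K -> K 0.
Proof.
move=> Kb; have [_ Kc _ [x /interior_subset Kx]] := Kb.
have := Kc x (- x) (1 / 2) Kx (sym_convex_bodyN Kb Kx).
rewrite scalerN -scaleNr -scalerDl (_ : 1 / 2 - (1 - 1 / 2) = 0) ?scale0r; last lra.
by apply; lra.
Qed.

Lemma dilate_setI_vspace (L : {vspace 'rV[R]_n}) l x : 0 < l ->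
  dilate l (K `&` [set v | v \in L]) x <-> dilate l K x /\ x \in L.
Proof.
move=> l0; split=> [[y [Ky yL] <-]|[[y Ky yx] xL]]; first by split; [exists y | exact: memvZ].
exists y => //; split=> //=.
by rewrite -[y](scalerK (lt0r_neq0 l0)) yx memvZ.
Qed.

Lemma dilateZ t c x : (forall z, K z -> K (- z)) ->
  dilate t K x -> dilate (`|c| * t) K (c *: x).
Proof.
move=> KN [y Ky <-]; have [c0|c0] := leP 0 c.
  by exists y => //; rewrite scalerA ger0_norm.
by exists (- y); [exact: KN | rewrite scalerN scalerA ltr0_norm // mulNr scaleNr opprK].
Qed.

Hypotheses (Kc : Defs.convex_set K) (K0 : K 0).

Lemma dilate_le t t' x : 0 <= t -> t <= t' -> dilate t K x -> dilate t' K x.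
Proof.
move=> t0 tt' [y Ky <-]; have [t'0|t'0] := eqVneq t' 0.
  have -> : t = 0 by apply/le_anti; rewrite t0 -t'0 tt'.
  by exists 0; rewrite ?scaler0 ?scale0r.
have t'p : 0 < t' by rewrite lt_def t'0 (le_trans t0).
exists ((t / t') *: y + (1 - t / t') *: 0).
  by apply: (Kc Ky K0); [exact: divr_ge0 t0 (ltW t'p) | rewrite ler_pdivrMr // mul1r].
by rewrite scaler0 addr0 scalerA mulrCA mulfV // mulr1.
Qed.

Lemma dilateD s t x y : 0 <= s -> 0 <= t ->
  dilate s K x -> dilate t K y -> dilate (s + t) K (x + y).
Proof.
move=> s0 t0 [x' Kx <-] [y' Ky <-].
have [st0|st0] := eqVneq (s + t) 0.
  have [-> ->] : s = 0 /\ t = 0 by split; lra.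
  by exists 0 => //; rewrite !scale0r scaler0 addr0.
have stp : 0 < s + t by rewrite lt_def st0 addr_ge0.
exists ((s / (s + t)) *: x' + (1 - s / (s + t)) *: y').
  by apply: (Kc Kx Ky); [exact: divr_ge0 s0 (ltW stp) | rewrite ler_pdivrMr // mul1r; lra].
rewrite scalerDr !scalerA mulrCA mulfV // mulr1; congr (_ + _ *: _).
by field.
Qed.

Lemma dilate_sum (I : Type) (r : seq I) (w : I -> R) (F : I -> 'rV[R]_n) :
  (forall j, 0 <= w j) -> (forall j, dilate (w j) K (F j)) ->
  dilate (\sum_(j <- r) w j) K (\sum_(j <- r) F j).
Proof.
move=> w0 wF; elim: r => [|a r IH]; first by rewrite !big_nil; exists 0; rewrite ?scaler0.
by rewrite !big_cons; apply: dilateD => //; exact: sumr_ge0.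
Qed.

Lemma dilate_common (I : finType) (x : I -> 'rV[R]_n) :
  (forall k, exists2 t, 0 < t & dilate t K (x k)) ->
  exists2 l, 0 < l & forall k, dilate l K (x k).
Proof.
move=> xK; have /boolp.choice [t tx] : forall k, exists t, 0 < t /\ dilate t K (x k).
  by move=> k; have [t] := xK k; exists t.
have t0 k : 0 < t k by case: (tx k).
have sum_t0 : 0 <= \sum_k t k by apply: sumr_ge0 => k _; exact: ltW.
exists (1 + \sum_k t k) => [|k]; first lra.
apply: dilate_le (tx k).2; first exact: ltW.
rewrite (bigD1 k) //= addrCA lerDl addr_ge0 // sumr_ge0 // => j _; exact: ltW.
Qed.

End Dilates.

Section OrderedSeq.
Variable R : realDomainType.

Lemma exists_max_seq (s : seq R) :
  s != [::] -> exists2 x, x \in s & forall y, y \in s -> y <= x.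
Proof.
elim: s => // a s IH _; have [->|/IH[x xs xmax]] := eqVneq s [::].
  by exists a => [|y]; rewrite ?mem_seq1 // => /eqP ->.
have [ax|xa] := leP a x.
  by exists x => [|y]; rewrite in_cons ?xs ?orbT // => /predU1P[->|/xmax].
exists a => [|y]; first exact: mem_head.
by rewrite in_cons => /predU1P[->//|/xmax yx]; exact/(le_trans yx)/ltW.
Qed.

Lemma prod_le_of_count (s : seq R) (mu : nat -> R) :
  (forall x, x \in s -> 0 <= x) ->
  (forall m, (m < size s)%N -> (m.+1 <= count (fun x : R => (x <= mu m)%R) s)%N) ->
  \prod_(x <- s) x <= \prod_(m < size s) mu m.
Proof.
(* Peel off a largest element x: it is at most [mu (size s).-1], and removing it
   preserves the count hypothesis for the smaller m. *)
move sk : (size s) => k; elim: k s sk => [|k IH] s sk s0 smu.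
  by rewrite (size0nil sk) big_nil big_ord0.
have [|x xs xmax] := exists_max_seq (s := s); first by rewrite -size_eq0 sk.
have sizer : size (rem x s) = k by rewrite size_rem // sk.
have all_le y m : y \in s -> x <= mu m -> y <= mu m.
  by move=> ys; apply: le_trans (xmax y ys).
rewrite (perm_big _ (perm_to_rem xs)) big_cons big_ord_recr /= mulrC.
have x_muk : x <= mu k.
  have /allP/(_ x xs) // : all (fun y : R => y <= mu k) s.
  by rewrite all_count eqn_leq count_size sk smu.
apply: ler_pM x_muk; [|exact: s0|].
  by rewrite big_seq; apply: prodr_ge0 => y /mem_rem/s0.
apply: IH => // [y /mem_rem/s0 //|m mk].
have := smu m; rewrite ltnS (ltnW mk) => /(_ isT).
rewrite (permP (perm_to_rem xs)) /=.
have [xm _|//] := boolP (x <= mu m).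
suff -> : count (fun y => y <= mu m) (rem x s) = k by [].
rewrite -sizer; apply/eqP; rewrite -all_count; apply/allP => y /mem_rem ys.
exact: all_le.
Qed.

End OrderedSeq.

Lemma exists_gap_above (R : realDomainType) (s : seq R) (a : R) :
  exists2 e, 0 < e & forall x, x \in s -> a < x -> a + e <= x.
Proof.
elim: s => [|b s [e e0 sa]]; first by exists 1.
have [ba|ab] := leP b a.
  exists e => // x; rewrite in_cons => /predU1P[-> /(le_lt_trans ba)|/sa//].
  by rewrite ltxx.
exists (Num.min e (b - a)) => [|x]; first by rewrite lt_min e0 subr_gt0.
rewrite in_cons -lerBrDl ge_min => /predU1P[-> _|xs ax]; first by rewrite lexx orbT.
by rewrite lerBrDl sa.
Qed.

Lemma inf_adherent_finite (R : realType) (I : finType) (f : I -> R) (S : set R) :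
  S !=set0 -> has_lbound S -> exists2 l, S l & forall k, f k <= l -> f k <= inf S.
Proof.
move=> S0 Slb; have [e e0 gap] := exists_gap_above [seq f k | k <- enum I] (inf S).
have [l Sl lS] := inf_adherent e0 (conj S0 Slb).
exists l => // k fkl; rewrite leNgt; apply/negP => /(gap _ (map_f _ (mem_enum _ k))).
by move/(lt_le_trans lS)/(le_lt_trans fkl); rewrite ltxx.
Qed.

Section SuccessiveMinima.
Variables (R : realType) (n : nat) (S : set 'rV[R]_n).

(* [inf set0 = 0], so this holds even when no dilate of [S] is admissible. *)
Lemma succ_min_ge0 j : 0 <= succ_min S j.
Proof.
rewrite /succ_min; set E := [set l | _].
have [[x Ex]|E0] := pselect (E !=set0).
  by apply: lb_le_inf; [exists x | move=> y [/ltW]].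
by rewrite (_ : E = set0) ?inf0 // -subset0 => x Ex; apply: E0; exists x.
Qed.

Lemma succ_min_le j l :
  0 < l -> affdim_ge (dilate l S `&` [set v | lattice_pt v]) j -> succ_min S j <= l.
Proof. by move=> l0 Sl; apply: ge_inf => //; exists 0 => y [/ltW]. Qed.

Lemma leq_card_succ_min_le N l :
  0 < l -> affdim_ge (dilate l S `&` [set v | lattice_pt v]) N ->
  (N <= #|[pred k : 'I_n | (succ_min S k.+1 <= l)%R]|)%N.
Proof.
move=> l0 Sl; have Nn := affdim_ge_leq_dim Sl.
rewrite -[N]card_ord -(card_imset predT (@widen_ord_inj _ _ Nn)).
apply/subset_leq_card/fintype.subsetP => _ /imsetP[k _ ->]; rewrite inE.
by apply: succ_min_le l0 (affdim_geW _ Sl); rewrite /= ltn_ord.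
Qed.

End SuccessiveMinima.

Section SectionMinima.
Variables (R : realType) (n p : nat) (K : set 'rV[R]_n) (A : 'M[R]_n).
Variables (L : {vspace 'rV[R]_n}) (J : 'I_p -> 'I_n).
Hypotheses (Kb : sym_convex_body K) (A_lattice : forall j : 'I_n, lattice_pt (row j A)).
Hypotheses (A_free : row_free A) (A_min : forall j : 'I_n, dilate (succ_min K j.+1) K (row j A)).
Hypothesis (AJ_L : (<<[seq row (J k) A | k : 'I_p]>> :&: L = 0)%VS).

Let Kc : Defs.convex_set K. Proof. by case: Kb. Qed.
Let K0 : K 0. Proof. exact: sym_convex_body0. Qed.

Lemma dilate_absorbing v : exists2 t, 0 < t & dilate t K v.
Proof.
have A_unit : A \in unitmx by rewrite -row_free_unit.
set c := v *m invmx A; pose t := \sum_j `|c 0 j| * succ_min K j.+1.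
have t0 : 0 <= t by apply: sumr_ge0 => j _; rewrite mulr_ge0 ?succ_min_ge0.
exists (t + 1); first by rewrite ltr_wpDl.
apply: (dilate_le Kc K0 t0 (_ : t <= t + 1)); first lra.
have -> : v = \sum_j c 0 j *: row j A by rewrite -mulmx_sum_row mulmxKV.
apply: (dilate_sum Kc K0) => j; first by rewrite mulr_ge0 ?succ_min_ge0.
exact/dilateZ/A_min/(sym_convex_bodyN Kb).
Qed.

Lemma leq_card_succ_min_outside_le m l : 0 < l ->
  affdim_ge (dilate l (K `&` [set v | v \in L]) `&` [set v | lattice_pt v]) m ->
  (m <= #|[pred k : 'I_n | (k \notin codom J) && (succ_min K k.+1 <= l)%R]|)%N.
Proof.
move=> l0 Sl; pose P := [pred k : 'I_n | (k \in codom J) && (succ_min K k.+1 <= l)%R].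
pose B := rowsub (enum_val : 'I_#|P| -> 'I_n) A.
have : affdim_ge (dilate l K `&` [set v | lattice_pt v]) (m + #|P|).
  apply: (affdim_ge_col_mx (U := L) (B := B) _ _ _ _ AJ_L _ Sl).
  - by move=> x [/(dilate_setI_vspace _ _ _ l0)[]].
  - by move=> x [/(dilate_setI_vspace _ _ _ l0)[]].
  - move=> j; rewrite /B row_rowsub; split; last exact: A_lattice.
    have /andP[_ le_l] := enum_valP j.
    exact: (dilate_le Kc K0 (succ_min_ge0 _ _) le_l (A_min _)).
  - move=> j; rewrite /B row_rowsub; have /andP[/codomP[k ->] _] := enum_valP j.
    by apply: memv_span; apply: map_f; rewrite mem_enum.
  - exact: row_free_rowsub (@enum_val_inj _ _) A_free.
move/(leq_card_succ_min_le l0).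
have -> : #|[pred k : 'I_n | (succ_min K k.+1 <= l)%R]| =
          (#|P| + #|[pred k : 'I_n | (k \notin codom J) && (succ_min K k.+1 <= l)%R]|)%N.
  rewrite -(cardID [pred k | k \in codom J]).
  by congr (_ + _)%N; apply: eq_card => k; rewrite !inE andbC.
by rewrite addnC leq_add2l.
Qed.

Variables (N : nat) (b : 'I_N -> 'rV[R]_n).
Hypotheses (b_lattice : forall k, lattice_pt (b k)) (b_L : forall k, b k \in L).
Hypothesis (b_free : row_free (\matrix_k b k)).

Lemma section_affdim_ge : exists2 l, 0 < l &
  affdim_ge (dilate l (K `&` [set v | v \in L]) `&` [set v | lattice_pt v]) N.
Proof.
have [l l0 bK] := dilate_common Kc K0 (fun k => dilate_absorbing (b k)).
exists l => //; exists 0, b; split.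
- split; last by move=> k; rewrite mxE int_num0.
  by apply/(dilate_setI_vspace _ _ _ l0); split; [exists 0; rewrite ?scaler0 | exact: mem0v].
- by move=> k; split; [apply/(dilate_setI_vspace _ _ _ l0) | exact: b_lattice].
- rewrite (_ : \matrix_k (b k - 0) = \matrix_k b k) //.
  by apply/row_matrixP => k; rewrite !rowK subr0.
Qed.

Lemma leq_card_succ_min_outside m : (m < N)%N ->
  (m.+1 <= #|[pred k : 'I_n | (k \notin codom J) &&
    (succ_min K k.+1 <= succ_min (K `&` [set v | v \in L]) m.+1)%R]|)%N.
Proof.
move=> mN; pose S := [set l : R | 0 < l /\
  affdim_ge (dilate l (K `&` [set v | v \in L]) `&` [set v | lattice_pt v]) m.+1].
have S0 : S !=set0.
  by have [l l0 Sl] := section_affdim_ge; exists l; split=> //; exact: affdim_geW Sl.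
have Slb : has_lbound S by exists 0 => y [/ltW].
have [l [l0 Sl] lS] := inf_adherent_finite (fun k : 'I_n => succ_min K k.+1) S0 Slb.
apply: leq_trans (leq_card_succ_min_outside_le l0 Sl) _.
by apply/subset_leq_card/fintype.subsetP => k; rewrite !inE => /andP[-> /lS].
Qed.

End SectionMinima.

Theorem lemma2p3 (R : realType) (n : nat) (K : set 'rV[R]_n)
  (A : 'M[R]_n) (i : nat) (L : {vspace 'rV[R]_n}) (J : 'I_(n - i) -> 'I_n) :
  sym_convex_body K ->
  (forall j : 'I_n, lattice_pt (row j A)) ->
  row_free A ->
  (forall j : 'I_n, dilate (succ_min K j.+1) K (row j A)) ->
  (1 <= i)%N -> (i <= n - 1)%N ->
  \dim L = i ->
  (exists b : 'I_i -> 'rV[R]_n,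
      [/\ forall k, lattice_pt (b k), forall k, b k \in L
        & row_free (\matrix_(k < i) b k)]) ->
  injective J ->
  (<<[seq row (J k) A | k : 'I_(n - i)]>> :&: L = 0)%VS ->
  \prod_(k < n | k \notin codom J) succ_min K k.+1
    <= \prod_(j < i) succ_min (K `&` [set v | v \in L]) j.+1.
Proof.
move=> Kb A_lattice A_free A_min _ i_lt_n _ [b [b_lattice b_L b_free]] J_inj AJ_L.
pose C := [pred k : 'I_n | k \notin codom J].
have size_s : size [seq succ_min K k.+1 | k : 'I_n <- enum C] = i.
  rewrite size_map -cardE; apply/eqP; rewrite -(eqn_add2l #|codom J|).
  rewrite (cardC (mem (codom J))) card_codom // !card_ord subnK //.
  by rewrite (leq_trans i_lt_n) ?leq_subr.
rewrite -big_enum -(big_map (fun k : 'I_n => succ_min K k.+1) xpredT id).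
have := prod_le_of_count (s := [seq succ_min K k.+1 | k : 'I_n <- enum C])
  (mu := fun m => succ_min (K `&` [set v | v \in L]) m.+1).
rewrite size_s; apply => [x /mapP[k _ ->]|m]; first exact: succ_min_ge0.
rewrite count_map.
move=> /(leq_card_succ_min_outside Kb A_lattice A_free A_min AJ_L b_lattice b_L b_free).
move/leq_trans; apply; rewrite cardE /enum_mem size_filter count_filter.
by apply/eq_leq/eq_count => k; rewrite !inE andbC.
Qed.
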